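(* Let $(\mathcal{K},c)$, $(\mathcal{K}',c')$, $(\mathcal{K}'',e)$ be 2-categories with Yang–Baxter operators, and let $\mathcal{F}:(\mathcal{K},c)\to(\mathcal{K}',c')$ and $\mathcal{G}:(\mathcal{K}',c')\to(\mathcal{K}'',e)$ be bilax functors with compatible Yang–Baxter operators. Then the composite $\mathcal{G}\mathcal{F}:(\mathcal{K},c)\to(\mathcal{K}'',e)$ (with the composite lax and colax structures) is a bilax functor with compatible Yang–Baxter operator, with Yang–Baxter operator $\nu_{g,f}:=\nu^{\mathcal{G}}_{\mathcal{F}(g),\mathcal{F}(f)}$ for 1-endocells $g,f$ of $\mathcal{K}$, where $\nu^{\mathcal{G}}$ is the Yang–Baxter operator of $\mathcal{G}$.
   Context: Conventions: in a 2-category, $\circ$ is horizontal composition ($g\circ f$: first $f$ then $g$), $\cdot$ is vertical composition ($\beta\cdot\alpha$: first $\alpha$), $1$ denotes identity 2-cells; a 1-endocell is a 1-cell $A\to A$. A functor $\mathcal{F}:\mathcal{K}\to\mathcal{K}'$ that is both lax and colax has lax structure $\mathcal{F}^2_{g,f}:\mathcal{F}(g)\circ\mathcal{F}(f)\Rightarrow\mathcal{F}(g\circ f)$, $\mathcal{F}^0_A:\mathrm{id}_{\mathcal{F}(A)}\Rightarrow\mathcal{F}(\mathrm{id}_A)$ (natural, associative, unital) and colax structure $\mathcal{F}_{2;g,f}:\mathcal{F}(g\circ f)\Rightarrow\mathcal{F}(g)\circ\mathcal{F}(f)$, $\mathcal{F}_{0;A}:\mathcal{F}(\mathrm{id}_A)\Rightarrow\mathrm{id}_{\mathcal{F}(A)}$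 (natural, coassociative, counital). A Yang–Baxter operator for $\mathcal{F}$ is a family of 2-cells $\nu_{g,f}:\mathcal{F}(g)\circ\mathcal{F}(f)\Rightarrow\mathcal{F}(f)\circ\mathcal{F}(g)$, for 1-endocells $f,g$ of a common object, natural in $f,g$, with $(\nu_{g,f}\circ1)\cdot(1\circ\nu_{h,f})\cdot(\nu_{h,g}\circ1)=(1\circ\nu_{h,g})\cdot(\nu_{h,f}\circ1)\cdot(1\circ\nu_{g,f})$ and $(1\circ\mathcal{F}_0)\cdot\nu_{\mathrm{id},f}\cdot(\mathcal{F}^0\circ1)=1_{\mathcal{F}(f)}=(\mathcal{F}_0\circ1)\cdot\nu_{f,\mathrm{id}}\cdot(1\circ\mathcal{F}^0)$. A Yang–Baxter operator $c$ of $\mathcal{K}$ is one for the identity 2-functor ($c_{g,f}:g\circ f\Rightarrow f\circ g$). Given $(\mathcal{K},c)$, a bilax functor $(\mathcal{F},\nu):(\mathcal{K},c)\to\mathcal{K}'$ is a lax and colax functor with a Yang–Baxter operator $\nu$ such that for all 1-endocells $f,g,h$ of a common object: $\nu_{hg,f}\cdot(\mathcal{F}^2_{h,g}\circ1)=(1\circ\mathcal{F}^2_{h,g})\cdot(\nu_{h,f}\circ1)\cdot(1\circ\nu_{g,f})$; $\nu_{\mathrm{id},f}\cdot(\mathcal{F}^0\circ1)=1\circ\mathcal{F}^0$; $\nu_{h,gf}\cdot(1\circ\mathcal{F}^2_{g,f})=(\mathcal{F}^2_{g,f}\circ1)\cdot(1\circ\nu_{h,f})\cdot(\nu_{h,g}\circ1)$;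 $\nu_{f,\mathrm{id}}\cdot(1\circ\mathcal{F}^0)=\mathcal{F}^0\circ1$; $(\mathcal{F}_{2;h,g}\circ1)\cdot\nu_{f,hg}=(1\circ\nu_{f,g})\cdot(\nu_{f,h}\circ1)\cdot(1\circ\mathcal{F}_{2;h,g})$; $(\mathcal{F}_0\circ1)\cdot\nu_{f,\mathrm{id}}=1\circ\mathcal{F}_0$; $(1\circ\mathcal{F}_{2;g,f})\cdot\nu_{gf,h}=(\nu_{g,h}\circ1)\cdot(1\circ\nu_{f,h})\cdot(\mathcal{F}_{2;g,f}\circ1)$; $(1\circ\mathcal{F}_0)\cdot\nu_{\mathrm{id},f}=\mathcal{F}_0\circ1$; and, for 1-cells $A\xrightarrow{k}B\xrightarrow{h}B\xrightarrow{f}B\xrightarrow{g}C$: $(\mathcal{F}^2_{g,h}\circ\mathcal{F}^2_{f,k})\cdot(1_{\mathcal{F}(g)}\circ\nu_{f,h}\circ1_{\mathcal{F}(k)})\cdot(\mathcal{F}_{2;g,f}\circ\mathcal{F}_{2;h,k})=\mathcal{F}_{2;gh,fk}\cdot\mathcal{F}(1_g\circ c_{f,h}\circ1_k)\cdot\mathcal{F}^2_{gf,hk}$, $\mathcal{F}^0_A\circ\mathcal{F}^0_A=\mathcal{F}_{2;\mathrm{id},\mathrm{id}}\cdot\mathcal{F}^0_A$, $\mathcal{F}_{0;A}\circ\mathcal{F}_{0;A}=\mathcal{F}_{0;A}\cdot\mathcal{F}^2_{\mathrm{id},\mathrm{id}}$, $\mathcal{F}_{0;A}\cdot\mathcal{F}^0_A=1_{\mathrm{id}_{\mathcal{F}(A)}}$.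 A bilax functor $(\mathcal{F},\nu):(\mathcal{K},c)\to\mathcal{K}'$ has compatible Yang–Baxter operator with respect to a Yang–Baxter operator $c'$ of $\mathcal{K}'$, written $\mathcal{F}:(\mathcal{K},c)\to(\mathcal{K}',c')$, if $\nu_{f,g}=c'_{\mathcal{F}(f),\mathcal{F}(g)}$ for all 1-endocells $f,g$ of a common object. *)

(* A strict 2-category is presented as an essentially algebraic
   structure: a type of objects, a type of 1-cells (with domain/codomain) and a
   type of 2-cells (with source/target 1-cells).  Composition operations are
   total functions, but every axiom is only asserted for well-typed
   (composable) arguments, so values on non-composable arguments are
   irrelevant junk.  This is equivalent to the usual (Cat-enriched) definition
   and avoids transports along equalities of 1-cells.

   Conventions (as in the paper):
     comp1 g f  = g o f   (first f, then g)           -- 1-cells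
     hcomp b a  = b o a   (horizontal, first a)         -- 2-cells
     vcomp b a  = b . a   (vertical, first a)           -- 2-cells
     id2 f      = 1_f *)

Set Implicit Arguments.

Record TwoCat := {
  ob : Type;
  c1 : Type;
  c2 : Type;
  dom : c1 -> ob;
  cod : c1 -> ob;
  id1 : ob -> c1;
  comp1 : c1 -> c1 -> c1;
  src : c2 -> c1;
  tgt : c2 -> c1;
  id2 : c1 -> c2;
  vcomp : c2 -> c2 -> c2;
  hcomp : c2 -> c2 -> c2;
  dom_id1 : forall A, dom (id1 A) = A;
  cod_id1 : forall A, cod (id1 A) = A;
  dom_comp1 : forall f g, cod f = dom g -> dom (comp1 g f) = dom f;
  cod_comp1 : forall f g, cod f = dom g -> cod (comp1 g f) = cod g;
  comp1_id_r : forall f, comp1 f (id1 (dom f)) = f;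
  comp1_id_l : forall f, comp1 (id1 (cod f)) f = f;
  comp1_assoc : forall f g h, cod f = dom g -> cod g = dom h ->
      comp1 h (comp1 g f) = comp1 (comp1 h g) f;
  dom_src_tgt : forall a, dom (src a) = dom (tgt a);
  cod_src_tgt : forall a, cod (src a) = cod (tgt a);
  src_id2 : forall f, src (id2 f) = f;
  tgt_id2 : forall f, tgt (id2 f) = f;
  src_vcomp : forall a b, tgt a = src b -> src (vcomp b a) = src a;
  tgt_vcomp : forall a b, tgt a = src b -> tgt (vcomp b a) = tgt b;
  vcomp_id_r : forall a, vcomp a (id2 (src a)) = a;
  vcomp_id_l : forall a, vcomp (id2 (tgt a)) a = a;
  vcomp_assoc : forall a b c, tgt a = src b -> tgt b = src c ->
      vcomp c (vcomp b a) = vcomp (vcomp c b) a;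
  src_hcomp : forall a b, cod (src a) = dom (src b) ->
      src (hcomp b a) = comp1 (src b) (src a);
  tgt_hcomp : forall a b, cod (src a) = dom (src b) ->
      tgt (hcomp b a) = comp1 (tgt b) (tgt a);
  hcomp_id2 : forall f g, cod f = dom g -> hcomp (id2 g) (id2 f) = id2 (comp1 g f);
  hcomp_id_l : forall a, hcomp (id2 (id1 (cod (src a)))) a = a;
  hcomp_id_r : forall a, hcomp a (id2 (id1 (dom (src a)))) = a;
  hcomp_assoc : forall a b c, cod (src a) = dom (src b) -> cod (src b) = dom (src c) ->
      hcomp c (hcomp b a) = hcomp (hcomp c b) a;
  interchange : forall a a' b b', tgt a = src a' -> tgt b = src b' ->
      cod (src a) = dom (src b) ->
      hcomp (vcomp b' b) (vcomp a' a) = vcomp (hcomp b' a') (hcomp b a)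
}.

Arguments dom {_} _.
Arguments cod {_} _.
Arguments id1 {_} _.
Arguments comp1 {_} _ _.
Arguments src {_} _.
Arguments tgt {_} _.
Arguments id2 {_} _.
Arguments vcomp {_} _ _.
Arguments hcomp {_} _ _.

Definition endo (K : TwoCat) (A : ob K) (f : c1 K) : Prop := dom f = A /\ cod f = A.
Arguments endo {K} A f.

(* Data of a functor that carries both a lax and a colax structure:
   Flax2 g f   = F^2_{g,f}  : F g o F f => F (g o f)
   Flax0 A     = F^0_A      : id_{F A}  => F (id_A)
   Fcolax2 g f = F_{2;g,f}  : F (g o f) => F g o F f
   Fcolax0 A   = F_{0;A}    : F (id_A)  => id_{F A} *)
Record LCData (K K' : TwoCat) := {
  Fo : ob K -> ob K';
  F1 : c1 K -> c1 K';
  F2 : c2 K -> c2 K';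
  Flax2 : c1 K -> c1 K -> c2 K';
  Flax0 : ob K -> c2 K';
  Fcolax2 : c1 K -> c1 K -> c2 K';
  Fcolax0 : ob K -> c2 K'
}.

Arguments Fo {_ _} _ _.
Arguments F1 {_ _} _ _.
Arguments F2 {_ _} _ _.
Arguments Flax2 {_ _} _ _ _.
Arguments Flax0 {_ _} _ _.
Arguments Fcolax2 {_ _} _ _ _.
Arguments Fcolax0 {_ _} _ _.

Record IsLaxColax (K K' : TwoCat) (F : LCData K K') : Prop := {
  lc_dom : forall f, dom (F1 F f) = Fo F (dom f);
  lc_cod : forall f, cod (F1 F f) = Fo F (cod f);
  lc_src : forall a, src (F2 F a) = F1 F (src a);
  lc_tgt : forall a, tgt (F2 F a) = F1 F (tgt a);
  lc_vcomp : forall a b, tgt a = src b -> F2 F (vcomp b a) = vcomp (F2 F b) (F2 F a);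
  lc_id2 : forall f, F2 F (id2 f) = id2 (F1 F f);
  lax2_src : forall f g, cod f = dom g -> src (Flax2 F g f) = comp1 (F1 F g) (F1 F f);
  lax2_tgt : forall f g, cod f = dom g -> tgt (Flax2 F g f) = F1 F (comp1 g f);
  lax0_src : forall A, src (Flax0 F A) = id1 (Fo F A);
  lax0_tgt : forall A, tgt (Flax0 F A) = F1 F (id1 A);
  lax2_nat : forall a b, cod (src a) = dom (src b) ->
      vcomp (Flax2 F (tgt b) (tgt a)) (hcomp (F2 F b) (F2 F a))
      = vcomp (F2 F (hcomp b a)) (Flax2 F (src b) (src a));
  lax2_assoc : forall f g h, cod f = dom g -> cod g = dom h ->
      vcomp (Flax2 F h (comp1 g f)) (hcomp (id2 (F1 F h)) (Flax2 F g f))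
      = vcomp (Flax2 F (comp1 h g) f) (hcomp (Flax2 F h g) (id2 (F1 F f)));
  lax_unit_r : forall f,
      vcomp (Flax2 F f (id1 (dom f))) (hcomp (id2 (F1 F f)) (Flax0 F (dom f)))
      = id2 (F1 F f);
  lax_unit_l : forall f,
      vcomp (Flax2 F (id1 (cod f)) f) (hcomp (Flax0 F (cod f)) (id2 (F1 F f)))
      = id2 (F1 F f);
  colax2_src : forall f g, cod f = dom g -> src (Fcolax2 F g f) = F1 F (comp1 g f);
  colax2_tgt : forall f g, cod f = dom g -> tgt (Fcolax2 F g f) = comp1 (F1 F g) (F1 F f);
  colax0_src : forall A, src (Fcolax0 F A) = F1 F (id1 A);
  colax0_tgt : forall A, tgt (Fcolax0 F A) = id1 (Fo F A);
  colax2_nat : forall a b, cod (src a) = dom (src b) ->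
      vcomp (hcomp (F2 F b) (F2 F a)) (Fcolax2 F (src b) (src a))
      = vcomp (Fcolax2 F (tgt b) (tgt a)) (F2 F (hcomp b a));
  colax2_coassoc : forall f g h, cod f = dom g -> cod g = dom h ->
      vcomp (hcomp (id2 (F1 F h)) (Fcolax2 F g f)) (Fcolax2 F h (comp1 g f))
      = vcomp (hcomp (Fcolax2 F h g) (id2 (F1 F f))) (Fcolax2 F (comp1 h g) f);
  colax_counit_r : forall f,
      vcomp (hcomp (id2 (F1 F f)) (Fcolax0 F (dom f))) (Fcolax2 F f (id1 (dom f)))
      = id2 (F1 F f);
  colax_counit_l : forall f,
      vcomp (hcomp (Fcolax0 F (cod f)) (id2 (F1 F f))) (Fcolax2 F (id1 (cod f)) f)
      = id2 (F1 F f)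
}.

(* Yang--Baxter operator for F:  nu g f = nu_{g,f} : F g o F f => F f o F g,
   for 1-endocells f, g of a common object. *)
Record IsYB (K K' : TwoCat) (F : LCData K K') (nu : c1 K -> c1 K -> c2 K') : Prop := {
  yb_src : forall (A : ob K) f g, endo A f -> endo A g ->
      src (nu g f) = comp1 (F1 F g) (F1 F f);
  yb_tgt : forall (A : ob K) f g, endo A f -> endo A g ->
      tgt (nu g f) = comp1 (F1 F f) (F1 F g);
  yb_nat : forall (A : ob K) a b, endo A (src a) -> endo A (src b) ->
      vcomp (nu (tgt b) (tgt a)) (hcomp (F2 F b) (F2 F a))
      = vcomp (hcomp (F2 F a) (F2 F b)) (nu (src b) (src a));
  yb_braid : forall (A : ob K) f g h, endo A f -> endo A g -> endo A h ->
      vcomp (vcomp (hcomp (nu g f) (id2 (F1 F h))) (hcomp (id2 (F1 F g)) (nu h f)))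
            (hcomp (nu h g) (id2 (F1 F f)))
      = vcomp (vcomp (hcomp (id2 (F1 F f)) (nu h g)) (hcomp (nu h f) (id2 (F1 F g))))
              (hcomp (id2 (F1 F h)) (nu g f));
  yb_unit1 : forall (A : ob K) f, endo A f ->
      vcomp (vcomp (hcomp (id2 (F1 F f)) (Fcolax0 F A)) (nu (id1 A) f))
            (hcomp (Flax0 F A) (id2 (F1 F f)))
      = id2 (F1 F f);
  yb_unit2 : forall (A : ob K) f, endo A f ->
      vcomp (vcomp (hcomp (Fcolax0 F A) (id2 (F1 F f))) (nu f (id1 A)))
            (hcomp (id2 (F1 F f)) (Flax0 F A))
      = id2 (F1 F f)
}.

Definition IdData (K : TwoCat) : LCData K K := {|
  Fo := fun A => A;
  F1 := fun f => f;
  F2 := fun a => a;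
  Flax2 := fun g f => id2 (comp1 g f);
  Flax0 := fun A => id2 (id1 A);
  Fcolax2 := fun g f => id2 (comp1 g f);
  Fcolax0 := fun A => id2 (id1 A)
|}.

Definition IsYB2Cat (K : TwoCat) (c : c1 K -> c1 K -> c2 K) : Prop :=
  IsYB (IdData K) c.

Record IsBilax (K K' : TwoCat) (c : c1 K -> c1 K -> c2 K) (F : LCData K K')
    (nu : c1 K -> c1 K -> c2 K') : Prop := {
  bl_laxcolax : IsLaxColax F;
  bl_yb : IsYB F nu;
  bl_1 : forall (A : ob K) f g h, endo A f -> endo A g -> endo A h ->
      vcomp (nu (comp1 h g) f) (hcomp (Flax2 F h g) (id2 (F1 F f)))
      = vcomp (vcomp (hcomp (id2 (F1 F f)) (Flax2 F h g)) (hcomp (nu h f) (id2 (F1 F g))))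
              (hcomp (id2 (F1 F h)) (nu g f));
  bl_2 : forall (A : ob K) f, endo A f ->
      vcomp (nu (id1 A) f) (hcomp (Flax0 F A) (id2 (F1 F f)))
      = hcomp (id2 (F1 F f)) (Flax0 F A);
  bl_3 : forall (A : ob K) f g h, endo A f -> endo A g -> endo A h ->
      vcomp (nu h (comp1 g f)) (hcomp (id2 (F1 F h)) (Flax2 F g f))
      = vcomp (vcomp (hcomp (Flax2 F g f) (id2 (F1 F h))) (hcomp (id2 (F1 F g)) (nu h f)))
              (hcomp (nu h g) (id2 (F1 F f)));
  bl_4 : forall (A : ob K) f, endo A f ->
      vcomp (nu f (id1 A)) (hcomp (id2 (F1 F f)) (Flax0 F A))
      = hcomp (Flax0 F A) (id2 (F1 F f));
  bl_5 : forall (A : ob K) f g h, endo A f -> endo A g -> endo A h ->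
      vcomp (hcomp (Fcolax2 F h g) (id2 (F1 F f))) (nu f (comp1 h g))
      = vcomp (vcomp (hcomp (id2 (F1 F h)) (nu f g)) (hcomp (nu f h) (id2 (F1 F g))))
              (hcomp (id2 (F1 F f)) (Fcolax2 F h g));
  bl_6 : forall (A : ob K) f, endo A f ->
      vcomp (hcomp (Fcolax0 F A) (id2 (F1 F f))) (nu f (id1 A))
      = hcomp (id2 (F1 F f)) (Fcolax0 F A);
  bl_7 : forall (A : ob K) f g h, endo A f -> endo A g -> endo A h ->
      vcomp (hcomp (id2 (F1 F h)) (Fcolax2 F g f)) (nu (comp1 g f) h)
      = vcomp (vcomp (hcomp (nu g h) (id2 (F1 F f))) (hcomp (id2 (F1 F g)) (nu f h)))
              (hcomp (Fcolax2 F g f) (id2 (F1 F h)));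
  bl_8 : forall (A : ob K) f, endo A f ->
      vcomp (hcomp (id2 (F1 F f)) (Fcolax0 F A)) (nu (id1 A) f)
      = hcomp (Fcolax0 F A) (id2 (F1 F f));
  bl_9 : forall (A B C : ob K) k h f g,
      dom k = A -> cod k = B -> endo B h -> endo B f -> dom g = B -> cod g = C ->
      vcomp (vcomp (hcomp (Flax2 F g h) (Flax2 F f k))
                   (hcomp (hcomp (id2 (F1 F g)) (nu f h)) (id2 (F1 F k))))
            (hcomp (Fcolax2 F g f) (Fcolax2 F h k))
      = vcomp (vcomp (Fcolax2 F (comp1 g h) (comp1 f k))
                     (F2 F (hcomp (hcomp (id2 g) (c f h)) (id2 k))))
              (Flax2 F (comp1 g f) (comp1 h k));
  bl_10 : forall A : ob K,
      hcomp (Flax0 F A) (Flax0 F A) = vcomp (Fcolax2 F (id1 A) (id1 A)) (Flax0 F A);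
  bl_11 : forall A : ob K,
      hcomp (Fcolax0 F A) (Fcolax0 F A) = vcomp (Fcolax0 F A) (Flax2 F (id1 A) (id1 A));
  bl_12 : forall A : ob K,
      vcomp (Fcolax0 F A) (Flax0 F A) = id2 (id1 (Fo F A))
}.

Definition CompatYB (K K' : TwoCat) (F : LCData K K') (nu : c1 K -> c1 K -> c2 K')
    (c' : c1 K' -> c1 K' -> c2 K') : Prop :=
  forall (A : ob K) f g, endo A f -> endo A g -> nu f g = c' (F1 F f) (F1 F g).

Definition LCcomp (K K' K'' : TwoCat) (F : LCData K K') (G : LCData K' K'') :
    LCData K K'' := {|
  Fo := fun A => Fo G (Fo F A);
  F1 := fun f => F1 G (F1 F f);
  F2 := fun a => F2 G (F2 F a);
  Flax2 := fun g f => vcomp (F2 G (Flax2 F g f)) (Flax2 G (F1 F g) (F1 F f));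
  Flax0 := fun A => vcomp (F2 G (Flax0 F A)) (Flax0 G (Fo F A));
  Fcolax2 := fun g f => vcomp (Fcolax2 G (F1 F g) (F1 F f)) (F2 G (Fcolax2 F g f));
  Fcolax0 := fun A => vcomp (Fcolax0 G (Fo F A)) (F2 G (Fcolax0 F A))
|}.

Arguments IsLaxColax {K K'} F.
Arguments IsYB {K K'} F nu.
Arguments IsYB2Cat {K} c.
Arguments IsBilax {K K'} c F nu.
Arguments CompatYB {K K'} F nu c'.
Arguments LCcomp {K K' K''} F G.


(* Each axiom for GF is obtained by
   sliding the G-image of F's structure across G's structure (naturality of
   G^2, G_2 and of nu^G), then applying the corresponding axiom of G and, where
   two structure cells of F meet, G applied to the axiom of F.  In the bilax
   interchange law the compatibility nu^F = c' is what makes the G-image of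
   F's law match the right-hand side of G's law. *)

(* The axioms, with the boundaries of their arguments as equational
   hypotheses, so that [rewrite ... by typing] can discharge them. *)
Section TwoCatAt.
Variable K : TwoCat.

Lemma comp1_id1_r_at (f : c1 K) A : dom f = A -> comp1 f (id1 A) = f.
Proof. intros <-; apply comp1_id_r. Qed.

Lemma comp1_id1_l_at (f : c1 K) A : cod f = A -> comp1 (id1 A) f = f.
Proof. intros <-; apply comp1_id_l. Qed.

Lemma dom_comp1_at (f g : c1 K) A B :
  dom f = A -> cod f = B -> dom g = B -> dom (comp1 g f) = A.
Proof. intros <- ? ?; apply dom_comp1; congruence. Qed.

Lemma cod_comp1_at (f g : c1 K) B C :
  cod g = C -> cod f = B -> dom g = B -> cod (comp1 g f) = C.
Proof. intros <- ? ?; apply cod_comp1; congruence. Qed.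

Lemma src_hcomp_at (a b : c2 K) f g :
  src a = f -> src b = g -> cod f = dom g -> src (hcomp b a) = comp1 g f.
Proof. intros <- <- ?; apply src_hcomp; assumption. Qed.

Lemma tgt_hcomp_at (a b : c2 K) f g :
  tgt a = f -> tgt b = g -> cod f = dom g -> tgt (hcomp b a) = comp1 g f.
Proof. intros <- <- ?; apply tgt_hcomp; rewrite cod_src_tgt, dom_src_tgt; assumption. Qed.

Lemma src_vcomp_at (a b : c2 K) f x :
  src a = f -> tgt a = x -> src b = x -> src (vcomp b a) = f.
Proof. intros <- ? ?; apply src_vcomp; congruence. Qed.

Lemma tgt_vcomp_at (a b : c2 K) g x :
  tgt b = g -> tgt a = x -> src b = x -> tgt (vcomp b a) = g.
Proof. intros <- ? ?; apply tgt_vcomp; congruence. Qed.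

Lemma vcomp_id2_r_at (a : c2 K) f : src a = f -> vcomp a (id2 f) = a.
Proof. intros <-; apply vcomp_id_r. Qed.

Lemma vcomp_id2_l_at (a : c2 K) f : tgt a = f -> vcomp (id2 f) a = a.
Proof. intros <-; apply vcomp_id_l. Qed.

End TwoCatAt.

Lemma yb_src_at {K K'} {F : LCData K K'} {nu} (Y : IsYB F nu) f g :
  endo (dom f) f -> endo (dom f) g -> src (nu g f) = comp1 (F1 F g) (F1 F f).
Proof. intros; eapply yb_src; eauto. Qed.

Lemma yb_tgt_at {K K'} {F : LCData K K'} {nu} (Y : IsYB F nu) f g :
  endo (dom f) f -> endo (dom f) g -> tgt (nu g f) = comp1 (F1 F f) (F1 F g).
Proof. intros; eapply yb_tgt; eauto. Qed.

(* Proves boundary side conditions by computing the boundaries of composite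
   cells from the hypotheses in context. *)
Ltac typing_step := first [
  rewrite dom_id1 | rewrite cod_id1 | rewrite src_id2 | rewrite tgt_id2 |
  erewrite dom_comp1_at by typing | erewrite cod_comp1_at by typing |
  erewrite src_vcomp_at by typing | erewrite tgt_vcomp_at by typing |
  erewrite src_hcomp_at by typing | erewrite tgt_hcomp_at by typing |
  rewrite comp1_id1_r_at by typing | rewrite comp1_id1_l_at by typing |
  rewrite <- comp1_assoc by typing |
  rewrite <- dom_src_tgt | rewrite <- cod_src_tgt |
  match goal with L : IsLaxColax _ |- _ => first [
     rewrite (lc_dom L) | rewrite (lc_cod L) | rewrite (lc_src L) | rewrite (lc_tgt L)
   | rewrite (lax0_src L) | rewrite (lax0_tgt L)
   | rewrite (colax0_src L) | rewrite (colax0_tgt L)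
   | rewrite (lax2_src L) by typing | rewrite (lax2_tgt L) by typing
   | rewrite (colax2_src L) by typing | rewrite (colax2_tgt L) by typing ] end |
  match goal with Y : IsYB (IdData _) _ |- _ => first [
     rewrite (yb_src_at Y) by typing | rewrite (yb_tgt_at Y) by typing ];
     cbn [IdData F1] end |
  match goal with Y : IsYB _ _ |- _ => first [
     rewrite (yb_src_at Y) by typing | rewrite (yb_tgt_at Y) by typing ] end |
  match goal with
  | H : dom _ = _ |- _ => rewrite H
  | H : cod _ = _ |- _ => rewrite H
  | H : src _ = _ |- _ => rewrite H
  | H : tgt _ = _ |- _ => rewrite H end ]
with typing := lazymatch goal with
  | |- endo _ _ => split; typing
  | _ => repeat typing_step; reflexivity end.

Section Whiskering.
Variable K : TwoCat.

Lemma vcomp_id2_id2 (f : c1 K) : vcomp (id2 f) (id2 f) = id2 f.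
Proof. pose proof (vcomp_id_l K (id2 f)) as H; rewrite tgt_id2 in H; exact H. Qed.

Lemma whiskerl_vcomp (f : c1 K) a b : tgt a = src b -> cod (src a) = dom f ->
  hcomp (id2 f) (vcomp b a) = vcomp (hcomp (id2 f) b) (hcomp (id2 f) a).
Proof. intros. rewrite <- interchange by typing. rewrite vcomp_id2_id2. reflexivity. Qed.

Lemma whiskerr_vcomp (f : c1 K) a b : tgt a = src b -> cod f = dom (src a) ->
  hcomp (vcomp b a) (id2 f) = vcomp (hcomp b (id2 f)) (hcomp a (id2 f)).
Proof. intros. rewrite <- interchange by typing. rewrite vcomp_id2_id2. reflexivity. Qed.

End Whiskering.

(* Vertical composites are kept right-nested; [vrewrite lem] rewrites with
   [lem] inside a window of one, two or three consecutive factors. *)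
Ltac vnorm := repeat (rewrite <- vcomp_assoc by typing).

Ltac vrewrite lem := first [ erewrite lem by typing
  | match goal with |- context [vcomp ?X (vcomp ?Y ?Z)] =>
       rewrite (vcomp_assoc _ Z Y X) by typing; erewrite lem by typing end
  | match goal with |- context [vcomp ?X (vcomp ?Y (vcomp ?W ?Z))] =>
       rewrite (vcomp_assoc _ (vcomp W Z) Y X) by typing;
       rewrite (vcomp_assoc _ Z W (vcomp X Y)) by typing; erewrite lem by typing end ];
  vnorm.

Ltac vrewrite_rev lem := first [ erewrite <- lem by typing
  | match goal with |- context [vcomp ?X (vcomp ?Y ?Z)] =>
       rewrite (vcomp_assoc _ Z Y X) by typing; erewrite <- lem by typing end
  | match goal with |- context [vcomp ?X (vcomp ?Y (vcomp ?W ?Z))] =>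
       rewrite (vcomp_assoc _ (vcomp W Z) Y X) by typing;
       rewrite (vcomp_assoc _ Z W (vcomp X Y)) by typing; erewrite <- lem by typing end ];
  vnorm.

Ltac vrewrite_rev_rhs lem := first [
    lazymatch goal with |- _ = ?R => match R with context [vcomp ?X (vcomp ?Y ?Z)] =>
       rewrite (vcomp_assoc _ Z Y X) by typing; erewrite <- lem by typing end end
  | lazymatch goal with |- _ = ?R => match R with context [vcomp ?X (vcomp ?Y (vcomp ?W ?Z))] =>
       rewrite (vcomp_assoc _ (vcomp W Z) Y X) by typing;
       rewrite (vcomp_assoc _ Z W (vcomp X Y)) by typing; erewrite <- lem by typing end end ];
  vnorm.

Section LaxColaxAt.
Context {K K' : TwoCat} {F : LCData K K'} (L : IsLaxColax F).

Lemma lax2_nat_at a b f g f' g' :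
  src a = f -> src b = g -> tgt a = f' -> tgt b = g' -> cod f = dom g ->
  vcomp (Flax2 F g' f') (hcomp (F2 F b) (F2 F a))
  = vcomp (F2 F (hcomp b a)) (Flax2 F g f).
Proof. intros <- <- <- <- ?; apply (lax2_nat L); assumption. Qed.

Lemma colax2_nat_at a b f g f' g' :
  src a = f -> src b = g -> tgt a = f' -> tgt b = g' -> cod f = dom g ->
  vcomp (hcomp (F2 F b) (F2 F a)) (Fcolax2 F g f)
  = vcomp (Fcolax2 F g' f') (F2 F (hcomp b a)).
Proof. intros <- <- <- <- ?; apply (colax2_nat L); assumption. Qed.

Lemma lax2_assoc_at f g h gf Fh hg Ff : cod f = dom g -> cod g = dom h ->
  gf = comp1 g f -> Fh = F1 F h -> hg = comp1 h g -> Ff = F1 F f ->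
  vcomp (Flax2 F h gf) (hcomp (id2 Fh) (Flax2 F g f))
  = vcomp (Flax2 F hg f) (hcomp (Flax2 F h g) (id2 Ff)).
Proof. intros ? ? -> -> -> ->; apply (lax2_assoc L); assumption. Qed.

Lemma colax2_coassoc_at f g h gf Fh hg Ff : cod f = dom g -> cod g = dom h ->
  gf = comp1 g f -> Fh = F1 F h -> hg = comp1 h g -> Ff = F1 F f ->
  vcomp (hcomp (id2 Fh) (Fcolax2 F g f)) (Fcolax2 F h gf)
  = vcomp (hcomp (Fcolax2 F h g) (id2 Ff)) (Fcolax2 F hg f).
Proof. intros ? ? -> -> -> ->; apply (colax2_coassoc L); assumption. Qed.

Lemma lax_unit_r_at f A i Ff Ff' : dom f = A -> i = id1 A -> Ff = F1 F f -> Ff' = F1 F f ->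
  vcomp (Flax2 F f i) (hcomp (id2 Ff) (Flax0 F A)) = id2 Ff'.
Proof. intros <- -> -> ->; apply (lax_unit_r L). Qed.

Lemma lax_unit_l_at f A i Ff Ff' : cod f = A -> i = id1 A -> Ff = F1 F f -> Ff' = F1 F f ->
  vcomp (Flax2 F i f) (hcomp (Flax0 F A) (id2 Ff)) = id2 Ff'.
Proof. intros <- -> -> ->; apply (lax_unit_l L). Qed.

Lemma colax_counit_r_at f A i Ff Ff' : dom f = A -> i = id1 A -> Ff = F1 F f -> Ff' = F1 F f ->
  vcomp (hcomp (id2 Ff) (Fcolax0 F A)) (Fcolax2 F f i) = id2 Ff'.
Proof. intros <- -> -> ->; apply (colax_counit_r L). Qed.

Lemma colax_counit_l_at f A i Ff Ff' : cod f = A -> i = id1 A -> Ff = F1 F f -> Ff' = F1 F f ->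
  vcomp (hcomp (Fcolax0 F A) (id2 Ff)) (Fcolax2 F i f) = id2 Ff'.
Proof. intros <- -> -> ->; apply (colax_counit_l L). Qed.

End LaxColaxAt.

Lemma yb_nat_at {K K'} {F : LCData K K'} {nu} (Y : IsYB F nu) A a b f g f' g' :
  endo A (src a) -> endo A (src b) -> src a = f -> src b = g -> tgt a = f' -> tgt b = g' ->
  vcomp (nu g' f') (hcomp (F2 F b) (F2 F a)) = vcomp (hcomp (F2 F a) (F2 F b)) (nu g f).
Proof. intros ? ? <- <- <- <-. eapply (yb_nat Y); eauto. Qed.

Section Composite.
Context {K K' K'' : TwoCat} {F : LCData K K'} {G : LCData K' K''}.
Hypotheses (LF : IsLaxColax F) (LG : IsLaxColax G).

(* Throughout, [rewrite <- (lc_id2 LG)] presents identities on G-images as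
   G-images of identities, so that the naturality laws of G apply to them. *)
Lemma LCcomp_laxcolax : IsLaxColax (LCcomp F G).
Proof.
constructor; cbn [LCcomp Fo F1 F2 Flax2 Flax0 Fcolax2 Fcolax0]; intros; try typing.
- rewrite (lc_vcomp LF) by typing. apply (lc_vcomp LG); typing.
- rewrite (lc_id2 LF). apply (lc_id2 LG).
- vnorm. vrewrite (lax2_nat_at LG). vrewrite_rev (lc_vcomp LG).
  vrewrite (lax2_nat_at LF). rewrite (lc_vcomp LG) by typing. vnorm. reflexivity.
- rewrite whiskerl_vcomp by typing. vnorm.
  rewrite <- (lc_id2 LG). vrewrite (lax2_nat_at LG). rewrite (lc_id2 LG).
  vrewrite (lax2_assoc_at LG). vrewrite_rev (lc_vcomp LG). vrewrite (lax2_assoc_at LF).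
  rewrite (lc_vcomp LG) by typing. vnorm.
  rewrite <- (lc_id2 LG). vrewrite_rev (lax2_nat_at LG). rewrite (lc_id2 LG).
  rewrite whiskerr_vcomp by typing. vnorm. reflexivity.
- rewrite whiskerl_vcomp by typing; vnorm.
  rewrite <- (lc_id2 LG). vrewrite (lax2_nat_at LG). rewrite (lc_id2 LG).
  vrewrite (lax_unit_r_at LG). erewrite vcomp_id2_r_at by typing.
  vrewrite_rev (lc_vcomp LG). erewrite (lax_unit_r_at LF) by typing. apply (lc_id2 LG).
- rewrite whiskerr_vcomp by typing; vnorm.
  rewrite <- (lc_id2 LG). vrewrite (lax2_nat_at LG). rewrite (lc_id2 LG).
  vrewrite (lax_unit_l_at LG). erewrite vcomp_id2_r_at by typing.
  vrewrite_rev (lc_vcomp LG). erewrite (lax_unit_l_at LF) by typing. apply (lc_id2 LG).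
- vnorm. vrewrite (colax2_nat_at LG). vrewrite_rev (lc_vcomp LG).
  vrewrite (colax2_nat_at LF). rewrite (lc_vcomp LG) by typing. vnorm. reflexivity.
- rewrite !whiskerl_vcomp, !whiskerr_vcomp by typing. vnorm.
  rewrite <- (lc_id2 LG). vrewrite (colax2_nat_at LG). rewrite (lc_id2 LG).
  vrewrite (colax2_coassoc_at LG). vrewrite_rev (lc_vcomp LG). vrewrite (colax2_coassoc_at LF).
  rewrite (lc_vcomp LG) by typing. vnorm.
  rewrite <- (lc_id2 LG). vrewrite_rev (colax2_nat_at LG). rewrite (lc_id2 LG). reflexivity.
- rewrite whiskerl_vcomp by typing; vnorm.
  rewrite <- (lc_id2 LG). vrewrite (colax2_nat_at LG). rewrite (lc_id2 LG).
  vrewrite (colax_counit_r_at LG). erewrite vcomp_id2_l_at by typing.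
  vrewrite_rev (lc_vcomp LG). erewrite (colax_counit_r_at LF) by typing. apply (lc_id2 LG).
- rewrite whiskerr_vcomp by typing; vnorm.
  rewrite <- (lc_id2 LG). vrewrite (colax2_nat_at LG). rewrite (lc_id2 LG).
  vrewrite (colax_counit_l_at LG). erewrite vcomp_id2_l_at by typing.
  vrewrite_rev (lc_vcomp LG). erewrite (colax_counit_l_at LF) by typing. apply (lc_id2 LG).
Qed.

Context {nuG : c1 K' -> c1 K' -> c2 K''}.
Hypothesis YG : IsYB G nuG.
Local Notation nuGF := (fun g f => nuG (F1 F g) (F1 F f)).

Lemma LCcomp_yb
    (F_counit_unit : forall A, vcomp (Fcolax0 F A) (Flax0 F A) = id2 (id1 (Fo F A))) :
  IsYB (LCcomp F G) nuGF.
Proof.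
constructor; cbn [LCcomp Fo F1 F2 Flax2 Flax0 Fcolax2 Fcolax0]; intros;
  repeat match goal with H : endo _ _ |- _ => destruct H end; try typing.
- apply (yb_nat_at YG (Fo F A)); typing.
- eapply (yb_braid YG); typing.
- rewrite whiskerl_vcomp, whiskerr_vcomp by typing; vnorm.
  rewrite <- (lc_id2 LG). vrewrite_rev (yb_nat_at YG). rewrite (lc_id2 LG).
  do 2 vrewrite_rev whiskerr_vcomp. vrewrite_rev (lc_vcomp LG).
  rewrite F_counit_unit, (lc_id2 LG). erewrite vcomp_id2_l_at by typing.
  vrewrite (yb_unit1 YG). reflexivity.
- rewrite whiskerl_vcomp, whiskerr_vcomp by typing; vnorm.
  rewrite <- (lc_id2 LG). vrewrite_rev (yb_nat_at YG). rewrite (lc_id2 LG).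
  do 2 vrewrite_rev whiskerl_vcomp. vrewrite_rev (lc_vcomp LG).
  rewrite F_counit_unit, (lc_id2 LG). erewrite vcomp_id2_l_at by typing.
  vrewrite (yb_unit2 YG). reflexivity.
Qed.

Context {e : c1 K'' -> c1 K'' -> c2 K''}.
Hypothesis HGc : CompatYB G nuG e.

Lemma LCcomp_compatYB : CompatYB (LCcomp F G) nuGF e.
Proof. intros A f g [? ?] [? ?]; cbn. eapply HGc; typing. Qed.

End Composite.

Section CompositeBilax.
Context {K K' K'' : TwoCat} {c : c1 K -> c1 K -> c2 K} {c' : c1 K' -> c1 K' -> c2 K'}.
Context {F : LCData K K'} {nuF : c1 K -> c1 K -> c2 K'}.
Context {G : LCData K' K''} {nuG : c1 K' -> c1 K' -> c2 K''}.
Hypotheses (Hc : IsYB (IdData K) c) (Hc' : IsYB (IdData K') c').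
Hypotheses (HF : IsBilax c F nuF) (HFc : CompatYB F nuF c') (HG : IsBilax c' G nuG).
Let LF := bl_laxcolax HF.
Let LG := bl_laxcolax HG.
Let YG := bl_yb HG.
Local Notation GF := (LCcomp F G).
Local Notation nuGF := (fun g f => nuG (F1 F g) (F1 F f)).

Lemma LCcomp_bilax_interchange (A B C : ob K) k h f g :
  dom k = A -> cod k = B -> endo B h -> endo B f -> dom g = B -> cod g = C ->
  vcomp (vcomp (hcomp (Flax2 GF g h) (Flax2 GF f k))
               (hcomp (hcomp (id2 (F1 GF g)) (nuGF f h)) (id2 (F1 GF k))))
        (hcomp (Fcolax2 GF g f) (Fcolax2 GF h k))
  = vcomp (vcomp (Fcolax2 GF (comp1 g h) (comp1 f k))
                 (F2 GF (hcomp (hcomp (id2 g) (c f h)) (id2 k))))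
          (Flax2 GF (comp1 g f) (comp1 h k)).
Proof.
intros ? ? [? ?] [? ?] ? ?; cbn [LCcomp Fo F1 F2 Flax2 Flax0 Fcolax2 Fcolax0].
rewrite !interchange by typing. vnorm.
do 2 vrewrite_rev_rhs (lc_vcomp LG). vrewrite_rev_rhs (bl_9 HF).
erewrite HFc by typing. rewrite !(lc_vcomp LG) by typing. vnorm.
vrewrite_rev_rhs (colax2_nat_at LG). vrewrite_rev (lax2_nat_at LG).
vrewrite_rev_rhs (bl_9 HG). reflexivity.
Qed.

Lemma LCcomp_bilax : IsBilax c GF nuGF.
Proof.
constructor.
{ exact (LCcomp_laxcolax LF LG). }
{ exact (LCcomp_yb LF LG YG (bl_12 HF)). }
all: cbn [LCcomp Fo F1 F2 Flax2 Flax0 Fcolax2 Fcolax0]; intros;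
  repeat match goal with H : endo _ _ |- _ => destruct H end.
1-8: rewrite !whiskerr_vcomp, !whiskerl_vcomp by typing; vnorm; rewrite <- (lc_id2 LG).
- vrewrite (yb_nat_at YG). rewrite (lc_id2 LG). vrewrite (bl_1 HG). reflexivity.
- vrewrite (yb_nat_at YG). rewrite (lc_id2 LG). vrewrite (bl_2 HG). reflexivity.
- vrewrite (yb_nat_at YG). rewrite (lc_id2 LG). vrewrite (bl_3 HG). reflexivity.
- vrewrite (yb_nat_at YG). rewrite (lc_id2 LG). vrewrite (bl_4 HG). reflexivity.
- vrewrite_rev (yb_nat_at YG). rewrite (lc_id2 LG). vrewrite (bl_5 HG). reflexivity.
- vrewrite_rev (yb_nat_at YG). rewrite (lc_id2 LG). vrewrite (bl_6 HG). reflexivity.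
- vrewrite_rev (yb_nat_at YG). rewrite (lc_id2 LG). vrewrite (bl_7 HG). reflexivity.
- vrewrite_rev (yb_nat_at YG). rewrite (lc_id2 LG). vrewrite (bl_8 HG). reflexivity.
- eapply LCcomp_bilax_interchange; eauto; split; assumption.
- rewrite interchange, (bl_10 HG) by typing. vnorm.
  vrewrite_rev (lc_vcomp LG). rewrite <- (bl_10 HF). vrewrite_rev (colax2_nat_at LG).
  reflexivity.
- rewrite interchange, (bl_11 HG) by typing. vnorm.
  vrewrite (lax2_nat_at LG). rewrite (bl_11 HF), (lc_vcomp LG) by typing. vnorm.
  reflexivity.
- vnorm. vrewrite_rev (lc_vcomp LG). rewrite (bl_12 HF), (lc_id2 LG).
  erewrite vcomp_id2_l_at by typing. apply (bl_12 HG).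
Qed.

End CompositeBilax.

Theorem proposition4p5 (K K' K'' : TwoCat)
    (c : c1 K -> c1 K -> c2 K) (c' : c1 K' -> c1 K' -> c2 K')
    (e : c1 K'' -> c1 K'' -> c2 K'')
    (Hc : IsYB2Cat c) (Hc' : IsYB2Cat c') (He : IsYB2Cat e)
    (F : LCData K K') (nuF : c1 K -> c1 K -> c2 K')
    (G : LCData K' K'') (nuG : c1 K' -> c1 K' -> c2 K'')
    (HF : IsBilax c F nuF) (HFc : CompatYB F nuF c')
    (HG : IsBilax c' G nuG) (HGc : CompatYB G nuG e) :
  IsBilax c (LCcomp F G) (fun g f => nuG (F1 F g) (F1 F f)) /\
  CompatYB (LCcomp F G) (fun g f => nuG (F1 F g) (F1 F f)) e.
Proof.
split.
- exact (LCcomp_bilax Hc Hc' HF HFc HG).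
- exact (LCcomp_compatYB (bl_laxcolax HF) HGc).
Qed.
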